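(* Let $\mathcal{G}$ be a finite-dimensional nilpotent Lie algebra and $S$ a finite abelian semigroup. Then the $S$-expanded algebra $\mathcal{G}_S=S\otimes\mathcal{G}$ is nilpotent; any resonant subalgebra $\mathcal{G}_{S,R}$ is nilpotent; and, if $S$ has a zero element $0_S$, the $0_S$-reduced algebra $\mathcal{G}_S^{\mathrm{red}}$ is nilpotent.
   Context: For a Lie algebra $\mathcal{G}$ with basis $\{X_i\}$, $[X_i,X_j]=C_{ij}^kX_k$, and a finite abelian semigroup $S=\{\lambda_\alpha\}$ with 2-selector $K_{\alpha\beta}^\gamma$ ($=1$ if $\lambda_\alpha\lambda_\beta=\lambda_\gamma$, else $0$), $\mathcal{G}_S$ has basis $X_{(i,\alpha)}=\lambda_\alpha\otimes X_i$ and bracket $[X_{(i,\alpha)},X_{(j,\beta)}]=K_{\alpha\beta}^\gamma C_{ij}^kX_{(k,\gamma)}$. A resonant subalgebra: given $\mathcal{G}=\bigoplus_{p\in I}V_p$ with $[V_p,V_q]\subset\bigoplus_{r\in i(p,q)}V_r$ and $S=\bigcup_{p\in I}S_p$ with $S_p\cdot S_q\subset\bigcap_{r\in i(p,q)}S_r$, $\mathcal{G}_{S,R}=\bigoplus_p S_p\otimes V_p$. For a zero element $0_S$ ($0_S\lambda=0_S$ for all $\lambda$), $\mathcal{G}_S^{\mathrm{red}}$ is spanned by $X_{(i,\alpha)}$ with $\lambda_\alpha\ne0_S$ with the same structure constants restricted to $\lambda_\gamma\neq 0_S$. A Lie algebra $\mathcal{L}$ is nilpotent if the lower central series $\mathcal{L}_{(0)}=\mathcal{L}$,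 $\mathcal{L}_{(n)}=[\mathcal{L}_{(n-1)},\mathcal{L}]$ reaches $0$. *)

From HB Require Import structures.
From mathcomp Require Import all_boot all_order all_algebra.
Set Implicit Arguments. Unset Strict Implicit. Unset Printing Implicit Defensive.
Import GRing.Theory.
Local Open Scope ring_scope.


(* Bracket-generated subspace [U, W] := span { br u w | u in U, w in W }.
   By bilinearity of br it is the span of the brackets of basis vectors. *)
Definition brSpace (K : fieldType) (vT : vectType K) (br : vT -> vT -> vT)
    (U W : {vspace vT}) : {vspace vT} :=
  (\sum_(u <- vbasis U) \sum_(w <- vbasis W) <[br u w]>)%VS.

Definition lcs (K : fieldType) (vT : vectType K) (br : vT -> vT -> vT)
    (W : {vspace vT}) (n : nat) : {vspace vT} :=
  iter n (fun U => brSpace br U W) W.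

Definition lie_nilpotent_in (K : fieldType) (vT : vectType K)
    (br : vT -> vT -> vT) (W : {vspace vT}) : Prop :=
  exists n, lcs br W n = 0%VS.

Definition lie_nilpotent (K : fieldType) (vT : vectType K)
    (br : vT -> vT -> vT) : Prop := lie_nilpotent_in br fullv.

Definition is_lie_bracket (K : fieldType) (vT : vectType K)
    (br : vT -> vT -> vT) : Prop :=
  [/\ (forall (a : K) (x y z : vT), br (a *: x + y) z = a *: br x z + br y z),
      (forall (a : K) (x y z : vT), br z (a *: x + y) = a *: br z x + br z y),
      (forall x : vT, br x x = 0) &
      (forall x y z : vT, br x (br y z) + br y (br z x) + br z (br x y) = 0)].

Definition abelian_semigroup (S : finType) (op : S -> S -> S) : Prop :=
  associative op /\ commutative op.

(* S (x) G is identified with functions S -> G:  f = sum_a lambda_a (x) f a.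
   Element lambda_a (x) v : *)
Definition stens (K : fieldType) (vT : vectType K) (S : finType)
    (a : S) (v : vT) : {ffun S -> vT} :=
  [ffun b => if b == a then v else 0].

(* S-expanded bracket: [lambda_a (x) x, lambda_b (x) y] = lambda_(ab) (x) [x,y],
   i.e. in components K_{ab}^c C_{ij}^k. *)
Definition expBr (K : fieldType) (vT : vectType K) (S : finType)
    (op : S -> S -> S) (br : vT -> vT -> vT)
    (f g : {ffun S -> vT}) : {ffun S -> vT} :=
  [ffun c => \sum_(a : S) \sum_(b : S | op a b == c) br (f a) (g b)].

Definition resSpace (K : fieldType) (vT : vectType K) (S I : finType)
    (V : I -> {vspace vT}) (SS : I -> {set S}) : {vspace {ffun S -> vT}} :=
  (\sum_(p : I) \sum_(a in SS p) \sum_(v <- vbasis (V p)) <[stens a v]>)%VS.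

Definition resonant (K : fieldType) (vT : vectType K) (S I : finType)
    (op : S -> S -> S) (br : vT -> vT -> vT)
    (V : I -> {vspace vT}) (ii : I -> I -> {set I}) (SS : I -> {set S}) : Prop :=
  [/\ directv (\sum_(p : I) V p)%VS,
      (\sum_(p : I) V p)%VS = fullv,
      (forall p q x y, x \in V p -> y \in V q ->
          br x y \in (\sum_(r in ii p q) V r)%VS),
      (\bigcup_(p : I) SS p = [set: S]) &
      (forall p q a b r, a \in SS p -> b \in SS q -> r \in ii p q ->
          op a b \in SS r)].

Definition redSpace (K : fieldType) (vT : vectType K) (S : finType)
    (z : S) : {vspace {ffun S -> vT}} :=
  (\sum_(a : S | a != z) \sum_(v <- vbasis (fullv : {vspace vT})) <[stens a v]>)%VS.

Definition redBr (K : fieldType) (vT : vectType K) (S : finType)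
    (op : S -> S -> S) (br : vT -> vT -> vT) (z : S)
    (f g : {ffun S -> vT}) : {ffun S -> vT} :=
  [ffun c => if c == z then 0 else expBr op br f g c].

(* Every component of a bracket [f, g] in S (x) G, expanded or 0_S-reduced, is a
   sum of brackets [f a, g b] in G.  Hence, by induction, every component of an
   element of the n-th term of the lower central series of ANY subspace W of
   S (x) G lies in the n-th term G_(n) of the lower central series of G, and
   G_(n) = 0 forces W_(n) = 0. *)
From HB Require Import structures.
From mathcomp Require Import all_boot all_order all_algebra.
Set Implicit Arguments.
Unset Strict Implicit.
Unset Printing Implicit Defensive.

Import GRing.Theory.
Local Open Scope ring_scope.

Section SeqSums.

Variables (K : fieldType) (vT : vectType K) (T : eqType).

Lemma sumv_seq_sup (r : seq T) (Vs : T -> {vspace vT}) t :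
  t \in r -> (Vs t <= \sum_(s <- r) Vs s)%VS.
Proof. by move=> tr; rewrite (big_rem _ tr) addvSl. Qed.

Lemma subv_seq_sum (r : seq T) (Vs : T -> {vspace vT}) (X : {vspace vT}) :
  (forall t, t \in r -> Vs t <= X)%VS -> (\sum_(s <- r) Vs s <= X)%VS.
Proof.
move=> sVX; rewrite big_seq; elim/big_ind: _ => [|U1 U2 *|]; last exact: sVX.
  exact: sub0v.
by rewrite subv_add; apply/andP.
Qed.

End SeqSums.

Lemma brSpace_subv (K : fieldType) (vT : vectType K) (br : vT -> vT -> vT)
    (U W X : {vspace vT}) :
  (forall u w, u \in U -> w \in W -> br u w \in X) -> (brSpace br U W <= X)%VS.
Proof.
move=> brUW; apply: subv_seq_sum => u /vbasis_mem uU.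
by apply: subv_seq_sum => w /vbasis_mem wW; rewrite -memvE brUW.
Qed.

Section BilinearBracket.

Variables (K : fieldType) (vT : vectType K) (br : vT -> vT -> vT).
Hypothesis brZDl : forall (a : K) (x y z : vT), br (a *: x + y) z = a *: br x z + br y z.
Hypothesis brZDr : forall (a : K) (x y z : vT), br z (a *: x + y) = a *: br z x + br z y.

Lemma br0l z : br 0 z = 0.
Proof.
have := brZDl 1 0 0 z; rewrite !scale1r addr0 => br0D.
by apply: (addrI (br 0 z)); rewrite addr0 -br0D.
Qed.

Lemma br0r z : br z 0 = 0.
Proof.
have := brZDr 1 0 0 z; rewrite !scale1r addr0 => br0D.
by apply: (addrI (br z 0)); rewrite addr0 -br0D.
Qed.

Lemma brZl a x z : br (a *: x) z = a *: br x z.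
Proof. by rewrite -[a *: x]addr0 brZDl br0l addr0. Qed.

Lemma brZr a x z : br z (a *: x) = a *: br z x.
Proof. by rewrite -[a *: x]addr0 brZDr br0r addr0. Qed.

Lemma brDl x y z : br (x + y) z = br x z + br y z.
Proof. by have := brZDl 1 x y z; rewrite !scale1r. Qed.

Lemma brDr z x y : br z (x + y) = br z x + br z y.
Proof. by have := brZDr 1 x y z; rewrite !scale1r. Qed.

Lemma br_suml (I : Type) (r : seq I) (F : I -> vT) z :
  br (\sum_(i <- r) F i) z = \sum_(i <- r) br (F i) z.
Proof.
exact: (big_morph (br^~ z) (fun x y => brDl x y z) (br0l z)).
Qed.

Lemma br_sumr (I : Type) (r : seq I) (F : I -> vT) z :
  br z (\sum_(i <- r) F i) = \sum_(i <- r) br z (F i).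
Proof.
exact: (big_morph (br z) (brDr z) (br0r z)).
Qed.

Lemma memv_brSpace (U W : {vspace vT}) x y :
  x \in U -> y \in W -> br x y \in brSpace br U W.
Proof.
move=> xU yW; rewrite (coord_vbasis xU) (coord_vbasis yW) br_suml.
apply: rpred_sum => i _; rewrite brZl br_sumr; apply: rpredZ.
apply: rpred_sum => j _; rewrite brZr; apply: rpredZ.
have bU : (vbasis U)`_i \in (vbasis U : seq vT) by rewrite mem_nth // size_tuple.
have bW : (vbasis W)`_j \in (vbasis W : seq vT) by rewrite mem_nth // size_tuple.
rewrite memvE; apply: subv_trans (sumv_seq_sup (fun w => <[br _ w]>%VS) bW) _.
exact: (sumv_seq_sup (fun u => \sum_(w <- vbasis W) <[br u w]>)%VS bU).
Qed.

End BilinearBracket.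

Section ComponentwiseBracket.

Variables (K : fieldType) (vT : vectType K) (S : finType).

Definition ffun_eval (c : S) (f : {ffun S -> vT}) : vT := f c.

Lemma ffun_eval_is_linear c : linear (ffun_eval c).
Proof. by move=> a f g; rewrite /ffun_eval !ffunE. Qed.

HB.instance Definition _ c :=
  GRing.isLinear.Build K {ffun S -> vT} vT _ (ffun_eval c) (ffun_eval_is_linear c).

Lemma memv_preim_eval c (L : {vspace vT}) f :
  (f \in linfun (ffun_eval c) @^-1: L)%VS = (f c \in L).
Proof. by rewrite -memv_preim lfunE. Qed.

Variables (br : vT -> vT -> vT) (B : {ffun S -> vT} -> {ffun S -> vT} -> {ffun S -> vT}).

Hypothesis B_componentwise : forall (L : {vspace vT}) (f g : {ffun S -> vT}),
  (forall c, f c \in L) -> forall c, B f g c \in brSpace br L fullv.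

Lemma lcs_componentwise W n f c : f \in lcs B W n -> f c \in lcs br fullv n.
Proof.
rewrite -memv_preim_eval; move: f; apply/subvP; elim: n c => [|n IHn] c /=.
  by apply/subvP => f _; rewrite memv_preim_eval memvf.
apply: brSpace_subv => f g fLn _; rewrite memv_preim_eval.
by apply: B_componentwise => c'; rewrite -memv_preim_eval (subvP (IHn c')).
Qed.

Lemma lie_nilpotent_in_componentwise W : lie_nilpotent br -> lie_nilpotent_in B W.
Proof.
move=> [n lcsG0]; exists n; apply/vspaceP => f; rewrite memv0.
apply/idP/eqP => [fLn|->]; last exact: mem0v.
apply/ffunP => c; rewrite ffunE; apply/eqP.
by rewrite -memv0 -lcsG0 (lcs_componentwise _ fLn).
Qed.

End ComponentwiseBracket.

Lemma expBr_componentwise (K : fieldType) (vT : vectType K) (br : vT -> vT -> vT)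
    (S : finType) (op : S -> S -> S) :
  is_lie_bracket br -> forall (L : {vspace vT}) (f g : {ffun S -> vT}),
  (forall c, f c \in L) -> forall c, expBr op br f g c \in brSpace br L fullv.
Proof.
move=> [brZDl brZDr _ _] L f g fL c; rewrite ffunE.
by apply: rpred_sum => a _; apply: rpred_sum => b _; rewrite memv_brSpace ?memvf.
Qed.

Lemma redBr_componentwise (K : fieldType) (vT : vectType K) (br : vT -> vT -> vT)
    (S : finType) (op : S -> S -> S) (z : S) :
  is_lie_bracket br -> forall (L : {vspace vT}) (f g : {ffun S -> vT}),
  (forall c, f c \in L) -> forall c, redBr op br z f g c \in brSpace br L fullv.
Proof.
move=> lie_br L f g fL c; rewrite ffunE.
by case: ifP => _; rewrite ?rpred0 ?expBr_componentwise.
Qed.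

Theorem mainTheorem4 (K : fieldType) (vT : vectType K) (br : vT -> vT -> vT)
    (S : finType) (op : S -> S -> S) :
  is_lie_bracket br -> lie_nilpotent br -> abelian_semigroup op ->
  [/\ lie_nilpotent (expBr op br),
      (forall (I : finType) (V : I -> {vspace vT}) (ii : I -> I -> {set I})
              (SS : I -> {set S}),
          resonant op br V ii SS ->
          lie_nilpotent_in (expBr op br) (resSpace V SS)) &
      (forall z : S, (forall l : S, op z l = z) ->
          lie_nilpotent_in (redBr op br z) (redSpace vT z))].
Proof.
move=> lie_br nil_br _; split=> [|I V ii SS _|z _];
  apply: lie_nilpotent_in_componentwise nil_br.
- exact: expBr_componentwise.
- exact: expBr_componentwise.
- exact: redBr_componentwise.
Qed.
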